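(* Let $(y_k)_{k\in\mathbb{N}}$ be a sequence in $\mathbb{W}$ with $y_k\in\mathbb{W}_{N(y_k)}$ and $N(y_k)\to\infty$. Let $(\mu,\nu)$ be a pair of diffuse probability measures on $[0,1]$ with $\frac12(\mu+\nu)=\lambda$ (Lebesgue measure on $[0,1]$), and let $y$ be the point of the Doob--Martin boundary corresponding to $(\mu,\nu)$. Then $y_k\to y$ in the Doob--Martin topology if and only if \[ \lim_{k\to\infty}\frac{\binom{y_k}{w}}{\binom{N(y_k)}{m}^2} = \mu^{\otimes m}\otimes\nu^{\otimes m}(\mathcal{S}(w)) \] for all $w\in\mathbb{W}_m$ and all $m\in\mathbb{N}$. Equivalently, $y_k\to y$ if and only if for each $m\in\mathbb{N}$ the random word in $\mathbb{W}_m$ obtained by selecting $m$ letters $a$ and $m$ letters $b$ uniformly at random from $y_k$ and keeping their relative order converges in distribution as $k\to\infty$ to $\mathcal{W}((X_1,\dots,X_m,Y_1,\dots,Y_m))$, where $X_1,X_2,\dots$ are i.i.d. with law $\mu$, $Y_1,Y_2,\dots$ are i.i.d. with law $\nu$, and the two sequences are independent.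
   Context: $\mathbb{W}_n$ is the set of words over $\{a,b\}$ with $n$ letters $a$ and $n$ letters $b$, $\mathbb{W}=\bigsqcup_n\mathbb{W}_n$, and $N(w)=n$ for $w\in\mathbb{W}_n$. $\binom{w}{v}$ is the number of occurrences of $v$ as a (not necessarily contiguous) sub-word of $w$. The Markov chain on $\mathbb{W}$ starts at the empty word and, from a word in $\mathbb{W}_n$, inserts a letter $a$ uniformly at random into one of the $2n+1$ slots and then a letter $b$ uniformly into one of the $2n+2$ slots. Its Doob--Martin kernel with reference state the empty word is $K(v,w)=\binom{w}{v}\binom{2m}{m}/\binom{m+n}{m}^2$ for $v\in\mathbb{W}_m$, $w\in\mathbb{W}_{m+n}$ (and $0$ if $N(w)<N(v)$). The Doob--Martin compactification is the closure of $\{K(\cdot,w):w\in\mathbb{W}\}$ in $\mathbb{R}_+^{\mathbb{W}}$ (pointwise convergence): $w_k\to z$ iff $K(v,w_k)\to K(v,z)$ for every $v\in\mathbb{W}$, where $K(\cdot,z)$ is the extended kernel; the boundary consists of the limit points not in $\mathbb{W}$. For $(x_1,\dots,x_n,y_1,\dots,y_n)\in\mathbb{R}^{2n}$ with distinct entries, listing the entries in increasing order as $z_1<\dots<z_{2n}$, $\mathcal{W}((x_1,\dots,x_n,y_1,\dots,y_n))=u_1\cdots u_{2n}\in\mathbb{W}_n$ with $u_i=a$ if $z_i\in\{x_1,\dots,x_n\}$ and $u_i=b$ if $z_i\in\{y_1,\dots,y_n\}$; for $v\in\mathbb{W}_n$, $\mathcal{S}(v):=\mathcal{W}^{-1}(\{v\})\subset\mathbb{R}^{2n}$.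 The boundary point corresponding to $(\mu,\nu)$ is the boundary point $y$ whose extended kernel is $K(w,y)=\binom{2m}{m}\mu^{\otimes m}\otimes\nu^{\otimes m}(\mathcal{S}(w))$ for $w\in\mathbb{W}_m$, $m\in\mathbb{N}_0$. *)

From HB Require Import structures.
From mathcomp Require Import all_boot all_order all_algebra.
From mathcomp Require Import all_classical all_reals all_analysis.
Set Implicit Arguments. Unset Strict Implicit. Unset Printing Implicit Defensive.
Import Order.TTheory GRing.Theory Num.Theory.
Import numFieldNormedType.Exports.
Local Open Scope classical_set_scope.
Local Open Scope ring_scope.

(* Words over {a,b} are bit sequences: letter a = true, letter b = false. *)

Definition inW (n : nat) (w : seq bool) : bool :=
  (count id w == n) && (count negb w == n).

Definition inWall (w : seq bool) : bool := count id w == count negb w.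

Definition Nw (w : seq bool) : nat := count id w.

(* binom(w, v) : number of occurrences of v as a (not necessarily contiguous)
   sub-word of w, i.e. number of choices of positions (masks) of w that
   spell v. *)
Definition occ (w v : seq bool) : nat :=
  #|[pred t : (size w).-tuple bool | mask t w == v]|.

(* Doob--Martin kernel K(v, w) with reference state the empty word. *)
Definition DMkernel {R : realType} (v w : seq bool) : R :=
  if (Nw v <= Nw w)%N then
    (occ w v)%:R * ('C((Nw v).*2, Nw v))%:R / ((('C(Nw w, Nw v))%:R) ^+ 2)
  else 0.

(* Convergence of a sequence of words to a point of the Doob--Martin
   compactification, the latter being identified with its (extended)
   kernel function v |-> K(v, z) (pointwise convergence on W). *)
Definition DMconv {R : realType} (y : nat -> seq bool) (Kz : seq bool -> R) :
    Prop :=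
  forall v, inWall v -> (fun k => DMkernel (R := R) v (y k)) @ \oo --> Kz v.

(* The map \mathcal{W}: for l = (x_1..x_n, y_1..y_n) (first n entries are the
   x's), sort the entries increasingly and record a (true) for an x and
   b (false) for a y. *)
Definition Wmap {R : realType} (n : nat) (l : seq R) : seq bool :=
  map snd (sort (fun p q : R * bool => p.1 <= q.1)
             ([seq (x, true) | x <- take n l] ++ [seq (x, false) | x <- drop n l])).

Definition Sset {R : realType} (n : nat) (w : seq bool) : set (seq R) :=
  [set l | size l = n.*2 /\ uniq l /\ Wmap n l = w].

(* Iterated integral \int[m_1]_{x_1} ... \int[m_k]_{x_k} f [:: x_1; ..; x_k];
   for nonnegative measurable f this is the integral of f against the
   product measure m_1 \otimes ... \otimes m_k (Tonelli). *)
Fixpoint iint {R : realType} (ms : seq {measure set R -> \bar R})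
    (f : seq R -> \bar R) : \bar R :=
  match ms with
  | [::] => f [::]
  | m :: ms' => (\int[m]_x iint ms' (fun l => f (x :: l)))%E
  end.

Definition prodS {R : realType} (mu nu : {measure set R -> \bar R})
    (n : nat) (w : seq bool) : R :=
  fine (iint (nseq n mu ++ nseq n nu) (fun l => (\1_(Sset n w) l)%:E)).

Definition boundaryKernel {R : realType} (mu nu : {measure set R -> \bar R})
    (w : seq bool) : R :=
  ('C((Nw w).*2, Nw w))%:R * prodS mu nu (Nw w) w.

(* Law of the random word in W_m obtained from y by selecting uniformly at
   random m letters a and m letters b of y (keeping their relative order):
   P(w) = #{selections spelling w} / #{selections}. *)
Definition sampleLaw {R : realType} (y : seq bool) (m : nat) (w : seq bool) : R :=
  (#|[pred t : (size y).-tuple bool | inW m (mask t y) && (mask t y == w)]|)%:R /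
  (#|[pred t : (size y).-tuple bool | inW m (mask t y)]|)%:R.

(* Convergence in distribution of random elements of the finite discrete
   space W_m (words of length 2m), given by their laws P_k, P:
   E[f(Z_k)] -> E[f(Z)] for every (necessarily bounded continuous) f. *)
Definition cvg_dist_words {R : realType} (m : nat) (Pk : nat -> seq bool -> R)
    (P : seq bool -> R) : Prop :=
  forall f : seq bool -> R,
    (fun k => \sum_(t : (m.*2).-tuple bool) f t * Pk k t) @ \oo -->
      \sum_(t : (m.*2).-tuple bool) f t * P t.

Definition diffuse {R : realType} (mu : {measure set R -> \bar R}) : Prop :=
  forall x : R, mu [set x] = 0%E.

From HB Require Import structures.
From mathcomp Require Import all_boot all_order all_algebra.
From mathcomp Require Import all_classical all_reals all_analysis.
Import Order.TTheory GRing.Theory Num.Theory.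
Import numFieldNormedType.Exports.
Set Implicit Arguments. Unset Strict Implicit. Unset Printing Implicit Defensive.
Local Open Scope classical_set_scope.
Local Open Scope ring_scope.

(* Once N(y_k) >= m, the kernel K(w, y_k) of a word w in W_m is C(2m, m)
   times occ(y_k, w) / C(N(y_k), m)^2, and the boundary kernel of (mu, nu)
   is C(2m, m) times mu^m (x) nu^m (S(w)); so Doob--Martin convergence is
   exactly convergence of the normalised occurrence counts.  Since y_k has
   C(N(y_k), m)^2 ways of selecting m letters a and m letters b, these
   normalised counts are the law of the sampled word on W_m, and
   convergence in distribution on the finite set W_m is pointwise
   convergence of the laws.  The hypotheses on mu and nu (diffuse, with
   mean the Lebesgue measure on [0, 1]) only guarantee that the limit is a
   genuine boundary point; the equivalences hold for any pair (mu, nu). *)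

Lemma card_tuple_bool_cons n (P : pred (seq bool)) :
  #|[pred t : n.+1.-tuple bool | P t]| =
  #|[pred t : n.-tuple bool | P (true :: t)]| +
  #|[pred t : n.-tuple bool | P (false :: t)]|.
Proof.
rewrite -!sum1_card !(big_mkcond (fun t => t \in _)) /=.
rewrite (reindex (fun p : bool * n.-tuple bool => [tuple of p.1 :: p.2])) /=.
  rewrite -(pair_bigA _ (fun (b : bool) (t : n.-tuple bool) =>
    if P (b :: t) then 1%N else 0%N)).
  by rewrite big_bool.
exists (fun t : n.+1.-tuple bool => (thead t, behead_tuple t)).
  by move=> [b t] _; congr pair; apply: val_inj.
by move=> t _; apply: val_inj => /=; rewrite [in RHS](tuple_eta t).
Qed.

Lemma card_mask_count (y : seq bool) i j :
  #|[pred t : (size y).-tuple bool |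
     (count id (mask t y) == i) && (count negb (mask t y) == j)]| =
  ('C(count id y, i) * 'C(count negb y, j))%N.
Proof.
elim: y i j => [|x y IHy] i j.
  have mask_nil (m : seq bool) : mask m [::] = [::] by case: m.
  rewrite (eq_card (B := [pred t : 0.-tuple bool | (0 == i)%N && (0 == j)%N])); last first.
    by move=> t; rewrite !inE mask_nil.
  case: i => [|i]; case: j => [|j] /=; last 3 first; try by rewrite eq_card0.
  by rewrite eq_cardT // -cardT card_tuple.
rewrite (card_tuple_bool_cons _ (fun s =>
  (count id (mask s (x :: y)) == i) && (count negb (mask s (x :: y)) == j))) /=.
set Cy := fun i j => #|[pred t : (size y).-tuple bool |
  (count id (mask t y) == i) && (count negb (mask t y) == j)]|.
have card_a i' j' : #|[pred t : (size y).-tuple bool |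
    ((1 + count id (mask t y))%N == i'.+1) &&
    ((0 + count negb (mask t y))%N == j')]| = Cy i' j'.
  by apply: eq_card => t; rewrite !inE add0n add1n eqSS.
have card_b i' j' : #|[pred t : (size y).-tuple bool |
    ((0 + count id (mask t y))%N == i') &&
    ((1 + count negb (mask t y))%N == j'.+1)]| = Cy i' j'.
  by apply: eq_card => t; rewrite !inE add0n add1n eqSS.
case: x => /=.
- case: i => [|i]; last by rewrite card_a /Cy !IHy add1n add0n binS mulnDl addnC.
  by rewrite eq_card0 // add0n IHy !bin0.
- case: j => [|j]; last by rewrite card_b /Cy !IHy add1n add0n binS mulnDr addnC.
  rewrite eq_card0 => [|t]; last by rewrite !inE add1n andbF.
  by rewrite add0n IHy !bin0.
Qed.

Lemma inW_Nw m w : inW m w -> Nw w = m.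
Proof. by case/andP => /eqP. Qed.

Lemma inW_size m w : inW m w -> size w = m.*2.
Proof. by case/andP => /eqP Ha /eqP Hb; rewrite -(count_predC id) -addnn Ha -Hb. Qed.

Lemma inW_inWall m w : inW m w -> inWall w.
Proof. by case/andP => /eqP Ha /eqP Hb; rewrite /inWall Ha Hb. Qed.

Lemma inWall_inW w : inWall w -> inW (Nw w) w.
Proof. by move=> /eqP Hw; rewrite /inW /Nw Hw eqxx. Qed.

Lemma card_mask_inW (y : seq bool) m : inWall y ->
  #|[pred t : (size y).-tuple bool | inW m (mask t y)]| = ('C(Nw y, m) ^ 2)%N.
Proof.
by move=> /eqP Hy; rewrite expnS expn1 {2}/Nw Hy -card_mask_count.
Qed.

Lemma Wmap_inW (R : realType) m (l : seq R) : size l = m.*2 -> inW m (Wmap m l).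
Proof.
move=> Hl; have Hm : (m <= size l)%N by rewrite Hl -addnn leq_addr.
rewrite /inW /Wmap !count_map !(permP (permEl (perm_sort _ _))) !count_cat !count_map.
rewrite (@eq_count _ (preim (pair^~ true) (preim snd id)) predT) //.
rewrite (@eq_count _ (preim (pair^~ false) (preim snd id)) pred0) //.
rewrite (@eq_count _ (preim (pair^~ true) (preim snd negb)) pred0) //.
rewrite (@eq_count _ (preim (pair^~ false) (preim snd negb)) predT) //.
rewrite !count_pred0 !count_predT size_takel // size_drop Hl.
by rewrite -addnn addnK add0n addn0 !eqxx.
Qed.

Section RealValued.
Variable R : realType.

Lemma sampleLawE (y : seq bool) m w : inWall y ->
  sampleLaw (R := R) y m w =
  if inW m w then (occ y w)%:R / ('C(Nw y, m)%:R ^+ 2) else 0.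
Proof.
move=> Hy; rewrite /sampleLaw card_mask_inW // natrX.
have [Hw|Hw] := boolP (inW m w).
  congr (_%:R / _); apply: eq_card => t; rewrite !inE.
  by case: eqP => [->|]; rewrite ?Hw ?andbF.
rewrite eq_card0 ?mul0r // => t; rewrite !inE.
by case: eqP => [->|]; rewrite ?(negbTE Hw) ?andbF.
Qed.

Lemma iint_eq0 (ms : seq {measure set R -> \bar R}) (f : seq R -> \bar R) :
  f =1 cst 0%E -> iint ms f = 0%E.
Proof.
elim: ms f => [|m ms IHms] f f0 /=; first exact: f0.
rewrite (eq_fun (fun x => IHms _ (fun l => f0 (x :: l)))).
exact: integral0.
Qed.

Lemma prodS_eq0 (mu nu : {measure set R -> \bar R}) m w :
  ~~ inW m w -> prodS mu nu m w = 0.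
Proof.
move=> Hw; rewrite /prodS iint_eq0 // => l.
rewrite indicE memNset //= => -[Hl [_ Hlw]].
by move: Hw; rewrite -Hlw Wmap_inW.
Qed.

Lemma sum_tuple_eq n (w : seq bool) (F : seq bool -> R) : size w = n ->
  \sum_(t : n.-tuple bool) (val t == w)%:R * F t = F w.
Proof.
move=> Hw; have Hw' : size w == n by rewrite Hw.
rewrite (bigD1 (Tuple Hw')) //= eqxx mul1r big1 ?addr0 // => t Ht.
suff /negbTE -> : val t != w by rewrite mul0r.
by apply: contra Ht => /eqP Htw; apply/eqP/val_inj.
Qed.

End RealValued.

Section Convergence.
Variables (R : realType) (y : nat -> seq bool).

Definition occ_ratio m w k : R := (occ (y k) w)%:R / ('C(Nw (y k), m)%:R ^+ 2).

Lemma DMkernelE w k : (Nw w <= Nw (y k))%N ->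
  DMkernel (R := R) w (y k) = 'C((Nw w).*2, Nw w)%:R * occ_ratio (Nw w) w k.
Proof. by move=> Hw; rewrite /DMkernel Hw mulrCA mulrA. Qed.

Lemma DMconv_occ_ratio (P : nat -> seq bool -> R) :
  (forall m, \forall k \near \oo, (m <= Nw (y k))%N) ->
  DMconv y (fun w => 'C((Nw w).*2, Nw w)%:R * P (Nw w) w) <->
  (forall m w, inW m w -> occ_ratio m w @ \oo --> P m w).
Proof.
move=> Nw_oo; set c := fun w => 'C((Nw w).*2, Nw w)%:R : R.
have c_neq0 w : c w != 0 by rewrite pnatr_eq0 -lt0n bin_gt0 -addnn leq_addr.
have DMkernel_near w : \forall k \near \oo,
    DMkernel w (y k) = c w * occ_ratio (Nw w) w k.
  by apply: filterS (Nw_oo (Nw w)) => k; apply: DMkernelE.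
split=> [DMy m w Hw | occ_cvg w Hw].
- rewrite -(inW_Nw Hw) -[P _ w](mulKf (c_neq0 w)).
  apply: cvg_trans _ (cvgMl_tmp (a := (c w)^-1) (DMy w (inW_inWall Hw))).
  apply: near_eq_cvg; apply: filterS (DMkernel_near w) => k /= ->.
  by rewrite mulKf.
- apply: cvg_trans _ (cvgMl_tmp (a := c w) (occ_cvg _ _ (inWall_inW Hw))).
  by apply: near_eq_cvg; apply: filterS (DMkernel_near w) => k ->.
Qed.

Lemma occ_ratio_cvg_dist (P : nat -> seq bool -> R) :
  (forall k, inWall (y k)) -> (forall m w, ~~ inW m w -> P m w = 0) ->
  (forall m w, inW m w -> occ_ratio m w @ \oo --> P m w) <->
  (forall m, cvg_dist_words m (fun k => sampleLaw (y k) m) (P m)).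
Proof.
move=> Wy P0; split=> [occ_cvg m f | cvg_dist m w Hw].
- apply: cvg_big => [|t _]; first exact: add_continuous.
  apply: cvgMl_tmp; under eq_cvg do rewrite sampleLawE //.
  have [Ht|Ht] := boolP (inW m t); first exact: occ_cvg.
  by rewrite P0 //; apply: cvg_cst.
- have Hs := inW_size Hw.
  have := cvg_dist m (fun s => (s == w)%:R).
  rewrite sum_tuple_eq //.
  by under eq_cvg do rewrite sum_tuple_eq // sampleLawE // Hw.
Qed.

End Convergence.

Theorem mainTheorem7 (R : realType) (y : nat -> seq bool)
    (mu nu : probability R R) :
  (forall k, inWall (y k)) ->
  (forall M : nat, exists k0 : nat, forall k, (k0 <= k)%N -> (M <= Nw (y k))%N) ->
  diffuse mu -> diffuse nu ->
  mu (~` `[0%R, 1%R]) = 0%E -> nu (~` `[0%R, 1%R]) = 0%E ->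
  (forall A : set R, measurable A ->
     ((mu A + nu A) * (2^-1)%:E = lebesgue_measure (A `&` `[0%R, 1%R]))%E) ->
  (DMconv y (boundaryKernel mu nu) <->
     (forall (m : nat) (w : seq bool), inW m w ->
        (fun k => (occ (y k) w)%:R / (('C(Nw (y k), m))%:R ^+ 2) : R) @ \oo -->
          prodS mu nu m w))
  /\
  (DMconv y (boundaryKernel mu nu) <->
     (forall m : nat,
        cvg_dist_words m (fun k => sampleLaw (y k) m) (prodS mu nu m))).
Proof.
move=> Wy Ny_oo _ _ _ _ _.
have Nw_oo m : \forall k \near \oo, (m <= Nw (y k))%N.
  by have [k0 Hk0] := Ny_oo m; exists k0.
have DMconv_occ := DMconv_occ_ratio (prodS mu nu) Nw_oo.
split=> //; rewrite DMconv_occ.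
exact/occ_ratio_cvg_dist/prodS_eq0.
Qed.
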